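(* The function $v$ satisfies, and is determined by, the following conditions, valid for every integer $n\ge 0$: \begin{itemize} \item $v(0)=0$; \item $v(2n+1)=v(n)$; \item $v(4n+2)=v(2n)+v(n)+b(n)-1$; \item $v(4n+4)=v(2n+2)+v(n)+b(n)-1$. \end{itemize} Equivalently, since $a(n)=v(n)+b(n)-1$, the last two conditions read $v(4n+2)=v(2n)+a(n)$ and $v(4n+4)=v(2n+2)+a(n)$.
   Context: Let $\Sigma^*$ denote the free monoid of finite words over the alphabet $\{0,1,2\}$, with concatenation as product; the empty word is allowed. A word $x_0x_1\cdots x_k\in\Sigma^*$ with $x_0\neq 0$ is a hyperbinary expansion of the nonnegative integer $\sum_{i=0}^k x_i2^{k-i}$. The empty word is the unique hyperbinary expansion of $0$. Write $\mathcal H(n)$ for the set of hyperbinary expansions of $n$, and $b(n)=|\mathcal H(n)|$. The graph $A(n)$ is the directed graph with vertex set $\mathcal H(n)$. Its arcs are the single-step reductions between elements of $\mathcal H(n)$, each carrying one of two labels: \begin{itemize} \item pairs $(\mathbf x02\mathbf y,\mathbf x10\mathbf y)$ and $(2\mathbf y,10\mathbf y)$ are arcs labeled $\to$; \item pairs $(\mathbf x12\mathbf y,\mathbf x20\mathbf y)$ are arcs labeled $\twoheadrightarrow$; \end{itemize} here $\mathbf x,\mathbf y\in\Sigma^*$ and both words must belong to $\mathcal H(n)$. $A(n)$ is connected. Let $a(n)$ be the number of arcs of $A(n)$, and let $v(n)=a(n)-b(n)+1$ be its cyclomatic number, i.e. the cyclomatic number of the underlying undirected graph. *)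

From mathcomp Require Import all_boot all_algebra.
Set Implicit Arguments. Unset Strict Implicit. Unset Printing Implicit Defensive.
Import GRing.Theory Num.Theory.

(* Words over {0,1,2} are represented as seq nat whose letters are <= 2. *)

(* Value of a word x_0 ... x_k : sum x_i 2^(k-i) (Horner, most significant first). *)
Definition hval (w : seq nat) : nat := foldl (fun acc d => acc * 2 + d) 0 w.

Definition is_hyper (n : nat) (w : seq nat) : bool :=
  [&& all (fun d => d <= 2) w,
      (if w is d :: _ then d != 0 else true) & hval w == n].

Fixpoint words (k : nat) : seq (seq nat) :=
  if k is k'.+1 then [seq d :: w | d <- [:: 0; 1; 2], w <- words k'] else [:: [::]].

(* H(n): a hyperbinary expansion of n has length <= n (for n >= 1 the leading
   digit is nonzero, so a word of length k+1 has value >= 2^k >= k+1; for n = 0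
   only the empty word), so filtering words of length <= n lists all of H(n),
   each exactly once. *)
Definition H (n : nat) : seq (seq nat) :=
  [seq w <- flatten [seq words k | k <- iota 0 n.+1] | is_hyper n w].

Definition b (n : nat) : nat := size (H n).

(* (x p y, x q y) for some words x, y *)
Definition infix_step (p q : seq nat) (u w : seq nat) : bool :=
  has (fun i => (u == take i u ++ p ++ drop (i + size p) u) &&
                (w == take i u ++ q ++ drop (i + size p) u))
      (iota 0 (size u).+1).

(* arcs labeled -> : (x02y, x10y) and (2y, 10y) *)
Definition arc_to (u w : seq nat) : bool :=
  infix_step [:: 0; 2] [:: 1; 0] u w
  || ((u == 2 :: behead u) && (w == [:: 1, 0 & behead u])).

(* arcs labeled ->> : (x12y, x20y) *)
Definition arc_tto (u w : seq nat) : bool := infix_step [:: 1; 2] [:: 2; 0] u w.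

(* number of arcs of A(n) (the two labels give disjoint sets of pairs) *)
Definition a (n : nat) : nat :=
  \sum_(u <- H n) count (fun w => arc_to u w) (H n)
  + \sum_(u <- H n) count (fun w => arc_tto u w) (H n).

Definition v (n : nat) : int := (a n)%:Z - (b n)%:Z + 1.

From mathcomp Require Import all_boot all_algebra.
From mathcomp Require Import zify.
Import GRing.Theory Num.Theory.

(* Sort hyperbinary expansions by their final letters: H(2n+1) = H(n)1, while
   H(4n+2) = H(n)10 + H(2n)2 and H(4n+4) = H(2n+2)0 + H(n)12.  Appending a
   common letter to both ends of an arc gives an arc and vice versa, so the
   arcs inside each block are copies of those of the smaller graphs; between
   the blocks the only arcs are u02 -> u10 (and 2 -> 10), resp. u12 -> u20,
   i.e. exactly one per element of H(n).  Hence a(2n+1) = a(n) and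
   a(4n+2) = a(2n) + a(n) + b(n), a(4n+4) = a(2n+2) + a(n) + b(n), which with
   the analogous recurrences for b yield those for v. *)

Lemma hval_acc acc w :
  foldl (fun acc d => acc * 2 + d) acc w = acc * 2 ^ size w + hval w.
Proof.
elim: w acc => [|d w IHw] acc /=; first by rewrite muln1 addn0.
by rewrite IHw [in RHS]/hval /= IHw expnS; nia.
Qed.

Lemma hval_cons d w : hval (d :: w) = d * 2 ^ size w + hval w.
Proof. by rewrite {1}/hval /= hval_acc. Qed.

Lemma hval_rcons w d : hval (rcons w d) = hval w * 2 + d.
Proof. by rewrite /hval -cats1 foldl_cat. Qed.

Lemma size_hyper n w : is_hyper n w -> size w <= n.
Proof.
case: w => [//|d w] /and3P [_ d_neq0 /eqP <-].
rewrite /= hval_cons; have := ltn_expl (size w) (isT : 1 < 2).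
by move: d_neq0; rewrite -lt0n; nia.
Qed.

Lemma mem_words k w : (w \in words k) = (size w == k) && all (fun d => d <= 2) w.
Proof.
elim: k w => [|k IHk] w; first by case: w.
apply/allpairsP/idP => [[[d w'] /= [d_digit w'P ->]]|].
  rewrite IHk in w'P; case/andP: w'P => /eqP size_w w'_digits.
  rewrite /= size_w eqxx w'_digits andbT.
  by case: d d_digit => [|[|[|]]].
case: w => [//|d w] /and3P [/eqP [size_w] d_le2 w_digits]; exists (d, w); split => //=.
  by rewrite !inE; case: d d_le2 => [|[|[|]]].
by rewrite IHk size_w eqxx.
Qed.

Lemma uniq_words k : uniq (words k).
Proof.
elim: k => [|k IHk] //.
by apply: allpairs_uniq => // -[d w] [d' w'] _ _ /= [-> ->].
Qed.

Lemma count_mem_H n w : count_mem w (H n) = is_hyper n w.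
Proof.
rewrite /H count_filter.
have [w_hyper|w_not] := boolP (is_hyper n w); last first.
  rewrite (eq_count (a2 := pred0)) ?count_pred0 // => x /=.
  by case: eqP => // ->; apply: negbTE.
rewrite (eq_count (a2 := pred1 w)); last by move=> x /=; case: eqP => // ->.
rewrite count_flatten -map_comp.
rewrite (eq_map (g := fun k => nat_of_bool (k == size w))); last first.
  move=> k /=; rewrite count_uniq_mem ?uniq_words // mem_words eq_sym.
  by case/and3P: w_hyper => ->; rewrite andbT.
rewrite sumn_count count_uniq_mem ?iota_uniq // mem_iota ltnS.
by rewrite size_hyper.
Qed.

Lemma mem_H n w : (w \in H n) = is_hyper n w.
Proof. by rewrite -has_pred1 has_count count_mem_H lt0b. Qed.

Lemma uniq_H n : uniq (H n).
Proof. by apply: count_mem_uniq => w; rewrite count_mem_H mem_H. Qed.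

Lemma hval_nil : hval [::] = 0.
Proof. by []. Qed.

Lemma is_hyper_nil n : is_hyper n [::] = (n == 0).
Proof. by rewrite /is_hyper /= eq_sym. Qed.

Lemma is_hyper_rcons_odd m w d :
  is_hyper (2 * m + 1) (rcons w d) = (d == 1) && is_hyper m w.
Proof.
by rewrite /is_hyper all_rcons hval_rcons; case: w => [|e w] /=; rewrite ?hval_nil; lia.
Qed.

Lemma is_hyper_rcons_even m w d :
  is_hyper (2 * m + 2) (rcons w d) =
  (d == 0) && is_hyper (m + 1) w || (d == 2) && is_hyper m w.
Proof.
by rewrite /is_hyper all_rcons hval_rcons; case: w => [|e w] /=; rewrite ?hval_nil; lia.
Qed.

Lemma is_hyper_rcons_double m w :
  w != [::] -> is_hyper (2 * m) (rcons w 0) = is_hyper m w.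
Proof. by rewrite /is_hyper all_rcons hval_rcons; case: w => [|e w] //= _; lia. Qed.

Lemma mem_map_rcons (s : seq (seq nat)) c w d :
  (rcons w d \in map (rcons^~ c) s) = (d == c) && (w \in s).
Proof.
have [->|d_neq_c] := eqVneq d c; first by rewrite (mem_map (@rcons_injl _ c)).
by apply/mapP => -[w' _ /eqP]; rewrite eqseq_rcons (negbTE d_neq_c) andbF.
Qed.

Lemma nil_notin_map_rcons (s : seq (seq nat)) c : [::] \notin map (rcons^~ c) s.
Proof. by apply/mapP => -[[|? ?] _]. Qed.

Lemma perm_H_odd m : perm_eq (H (2 * m + 1)) (map (rcons^~ 1) (H m)).
Proof.
apply: uniq_perm; first exact: uniq_H.
  by rewrite map_inj_uniq ?uniq_H //; apply: rcons_injl.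
case/lastP => [|w d].
  by rewrite (negbTE (nil_notin_map_rcons _ _)) mem_H is_hyper_nil addn1.
by rewrite mem_map_rcons !mem_H is_hyper_rcons_odd.
Qed.

Lemma perm_H_even m :
  perm_eq (H (2 * m + 2)) (map (rcons^~ 0) (H (m + 1)) ++ map (rcons^~ 2) (H m)).
Proof.
apply: uniq_perm; first exact: uniq_H.
  rewrite cat_uniq !map_inj_uniq ?uniq_H ?andbT //=; try exact: rcons_injl.
  by apply/hasPn => _ /mapP [w _ ->]; rewrite mem_map_rcons.
case/lastP => [|w d].
  by rewrite mem_cat !(negbTE (nil_notin_map_rcons _ _)) mem_H is_hyper_nil addn2.
by rewrite mem_cat !mem_map_rcons !mem_H is_hyper_rcons_even.
Qed.

Lemma perm_H_4n2 n : perm_eq (H (4 * n + 2))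
  (map (rcons^~ 0) (map (rcons^~ 1) (H n)) ++ map (rcons^~ 2) (H (2 * n))).
Proof.
have -> : 4 * n + 2 = 2 * (2 * n) + 2 by lia.
by apply: perm_trans (perm_H_even _) _; rewrite perm_cat2r perm_map // perm_H_odd.
Qed.

Lemma perm_H_4n4 n : perm_eq (H (4 * n + 4))
  (map (rcons^~ 0) (H (2 * n + 2)) ++ map (rcons^~ 2) (map (rcons^~ 1) (H n))).
Proof.
have -> : 4 * n + 4 = 2 * (2 * n + 1) + 2 by lia.
apply: perm_trans (perm_H_even _) _; rewrite (_ : 2 * n + 1 + 1 = 2 * n + 2); last by lia.
by rewrite perm_cat2l perm_map // perm_H_odd.
Qed.

Lemma b_odd n : b (2 * n + 1) = b n.
Proof. by rewrite /b (perm_size (perm_H_odd n)) size_map. Qed.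

Lemma b_4n2 n : b (4 * n + 2) = b n + b (2 * n).
Proof. by rewrite /b (perm_size (perm_H_4n2 n)) size_cat !size_map. Qed.

Lemma b_4n4 n : b (4 * n + 4) = b (2 * n + 2) + b n.
Proof. by rewrite /b (perm_size (perm_H_4n4 n)) size_cat !size_map. Qed.

Definition head_step (u w : seq nat) : bool :=
  (u == 2 :: behead u) && (w == [:: 1, 0 & behead u]).

Lemma arc_toE u w : arc_to u w = infix_step [:: 0; 2] [:: 1; 0] u w || head_step u w.
Proof. by []. Qed.

Lemma infix_stepP p q u w :
  reflect (exists x y, u = x ++ p ++ y /\ w = x ++ q ++ y) (infix_step p q u w).
Proof.
apply: (iffP hasP) => [[i _ /andP [/eqP u_def /eqP w_def]]|[x [y [-> ->]]]].
  by exists (take i u), (drop (i + size p) u).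
exists (size x); first by rewrite mem_iota !size_cat; lia.
by rewrite take_size_cat // catA drop_size_cat ?size_cat // -catA !eqxx.
Qed.

Lemma cat_pair (x : seq nat) c d : x ++ [:: c; d] = rcons (rcons x c) d.
Proof. by rewrite -!cats1 -catA. Qed.

Section AppendLetter.

Variables (p q : seq nat).
Hypotheses (p_last2 : forall z, last z p = 2) (q_last0 : forall z, last z q = 0).

(* A step rewrites an infix ending in 2 into one ending in 0, so when both
   sides end in the same letter the step happens strictly inside. *)
Lemma infix_step_rcons u w c :
  infix_step p q (rcons u c) (rcons w c) = infix_step p q u w.
Proof.
apply/infix_stepP/infix_stepP => [[x [y]]|[x [y [-> ->]]]]; last first.
  by exists x, (rcons y c); rewrite !rcons_cat.
case/lastP: y => [|y e] [u_def w_def].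
  have := congr1 (last 0) u_def; have := congr1 (last 0) w_def.
  by rewrite !cats0 !last_rcons !last_cat p_last2 q_last0 => ->.
move: u_def w_def; rewrite -!rcons_cat => /rcons_inj [-> _] /rcons_inj [-> _].
by exists x, y.
Qed.

End AppendLetter.

Lemma infix_step_rcons_neq p q u w c d : c != d ->
  infix_step p q (rcons u c) (rcons w d) ->
  exists x, rcons u c = x ++ p /\ rcons w d = x ++ q.
Proof.
move=> c_neq_d /infix_stepP [x [y]]; case/lastP: y => [|y e] [u_def w_def].
  by exists x; rewrite u_def w_def !cats0.
move: u_def w_def; rewrite -!rcons_cat => /rcons_inj [_ c_e] /rcons_inj [_ d_e].
by rewrite c_e d_e eqxx in c_neq_d.
Qed.

Lemma head_step_rcons u w c : head_step (rcons u c) (rcons w c) = head_step u w.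
Proof.
rewrite /head_step; case: u => [|e u] /=.
  rewrite (_ : [:: 1; 0] = rcons [:: 1] 0) // eqseq_rcons.
  by case: c => [|[|[|c]]] //=; rewrite andbF.
rewrite (_ : [:: 1, 0 & rcons u c] = rcons [:: 1, 0 & u] c) // eqseq_rcons eqxx andbT.
by rewrite !eqseq_cons !eqxx.
Qed.

Lemma head_step_rcons_neq u w c d : c != d ->
  head_step (rcons u c) (rcons w d) -> [/\ u = [::], c = 2, w = [:: 1] & d = 0].
Proof.
rewrite /head_step; case: u => [|e u] /= c_neq_d.
  rewrite (_ : [:: 1; 0] = rcons [:: 1] 0) // eqseq_rcons eqseq_cons andbT.
  by move=> /andP [/eqP -> /andP [/eqP -> /eqP ->]].
rewrite (_ : [:: 1, 0 & rcons u c] = rcons [:: 1, 0 & u] c) // eqseq_rcons.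
by move=> /andP [_ /andP [_ /eqP d_eq_c]]; rewrite d_eq_c eqxx in c_neq_d.
Qed.

Lemma arc_to_rcons u w c : arc_to (rcons u c) (rcons w c) = arc_to u w.
Proof. by rewrite !arc_toE infix_step_rcons // head_step_rcons. Qed.

Lemma arc_tto_rcons u w c : arc_tto (rcons u c) (rcons w c) = arc_tto u w.
Proof. exact: infix_step_rcons. Qed.

Lemma arc_to_rcons_02 u w : arc_to (rcons u 0) (rcons w 2) = false.
Proof.
apply/negbTE; rewrite arc_toE; apply/orP.
case=> [/infix_step_rcons_neq | /head_step_rcons_neq] => // -[] // x [].
by rewrite cat_pair => /rcons_inj [].
Qed.

Lemma arc_tto_rcons_02 u w : arc_tto (rcons u 0) (rcons w 2) = false.
Proof.
apply/negbTE/negP => /infix_step_rcons_neq -[] // x [].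
by rewrite cat_pair => /rcons_inj [].
Qed.

Lemma arc_to_rcons_2_10 u w :
  arc_to (rcons w 2) (rcons (rcons u 1) 0) =
  (w == [::]) && (u == [::]) || (w == rcons u 0).
Proof.
rewrite arc_toE; apply/idP/idP.
  case/orP=> [/infix_step_rcons_neq | /head_step_rcons_neq] => /(_ isT).
    move=> [x []]; rewrite !cat_pair => /rcons_inj [->] /rcons_inj [].
    by move/rcons_inj => [->]; rewrite eqxx orbT.
  by move=> [-> _ u1_def _]; case: u u1_def => [|? []].
case/orP=> [/andP [/eqP -> /eqP ->] // | /eqP ->].
by apply/orP; left; apply/infix_stepP; exists u, [::]; rewrite !cats0 !cat_pair.
Qed.

Lemma arc_tto_rcons_2_10 u w : arc_tto (rcons w 2) (rcons (rcons u 1) 0) = false.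
Proof.
apply/negbTE/negP => /infix_step_rcons_neq -[] // x [] _.
by rewrite cat_pair => /rcons_inj [] /rcons_inj [].
Qed.

Lemma arc_to_rcons_12_0 u w : arc_to (rcons (rcons u 1) 2) (rcons w 0) = false.
Proof.
apply/negbTE; rewrite arc_toE; apply/orP.
case=> [/infix_step_rcons_neq | /head_step_rcons_neq] => // -[] //; last by case: u.
by move=> x []; rewrite cat_pair => /rcons_inj [] /rcons_inj [].
Qed.

Lemma arc_tto_rcons_12_0 u w :
  arc_tto (rcons (rcons u 1) 2) (rcons w 0) = (w == rcons u 2).
Proof.
apply/idP/idP => [/infix_step_rcons_neq [] // x []|/eqP ->].
  by rewrite !cat_pair => /rcons_inj [/rcons_inj [->]] /rcons_inj [->].
by apply/infix_stepP; exists u, [::]; rewrite !cats0 !cat_pair.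
Qed.

Definition arc_count (R : rel (seq nat)) (s t : seq (seq nat)) : nat :=
  \sum_(u <- s) count (R u) t.

Lemma aE n : a n = arc_count arc_to (H n) (H n) + arc_count arc_tto (H n) (H n).
Proof. by []. Qed.

Section ArcCount.

Variable R : rel (seq nat).

Lemma arc_count_perm {s s' t t'} :
  perm_eq s s' -> perm_eq t t' -> arc_count R s t = arc_count R s' t'.
Proof.
move=> perm_s perm_t; rewrite /arc_count (perm_big _ perm_s).
by apply: eq_bigr => u _; apply: (permP perm_t).
Qed.

Lemma arc_count_catl s1 s2 t :
  arc_count R (s1 ++ s2) t = arc_count R s1 t + arc_count R s2 t.
Proof. exact: big_cat. Qed.

Lemma arc_count_catr s t1 t2 :
  arc_count R s (t1 ++ t2) = arc_count R s t1 + arc_count R s t2.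
Proof. by rewrite /arc_count -big_split; apply: eq_bigr => u _; rewrite count_cat. Qed.

Lemma arc_count_cat2 s1 s2 :
  arc_count R (s1 ++ s2) (s1 ++ s2) =
  arc_count R s1 s1 + arc_count R s1 s2 + arc_count R s2 s1 + arc_count R s2 s2.
Proof. by rewrite arc_count_catl !arc_count_catr !addnA. Qed.

Lemma arc_count_mapl f s t :
  arc_count R (map f s) t = arc_count [rel x y | R (f x) y] s t.
Proof. exact: big_map. Qed.

Lemma arc_count_mapr g s t :
  arc_count R s (map g t) = arc_count [rel x y | R x (g y)] s t.
Proof. by apply: eq_bigr => u _; rewrite count_map. Qed.

Lemma arc_count_swap s t : arc_count R s t = arc_count [rel y x | R x y] t s.
Proof.
rewrite /arc_count; elim: s => [|x s IHs]; first by rewrite big_nil big1.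
by rewrite big_cons IHs big_split /= -sum1_count big_mkcond.
Qed.

Lemma arc_count_functional s t :
  {in s, forall u, count (R u) t = 1} -> arc_count R s t = size s.
Proof. by move=> one_succ; rewrite /arc_count -sum1_size; apply: eq_big_seq. Qed.

End ArcCount.

Lemma arc_count_eq R R' s t : R =2 R' -> arc_count R s t = arc_count R' s t.
Proof. by move=> eqR; apply: eq_bigr => u _; apply: eq_count => w; apply: eqR. Qed.

Lemma arc_count0 R s t : (forall u w, R u w = false) -> arc_count R s t = 0.
Proof.
move=> R_false; rewrite /arc_count big1 // => u _.
by rewrite (eq_count (a2 := pred0)) ?count_pred0.
Qed.

Lemma arc_count_map0 R (f g : seq nat -> seq nat) s t :
  (forall u w, R (f u) (g w) = false) -> arc_count R (map f s) (map g t) = 0.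
Proof. by move=> R_false; rewrite arc_count_mapl arc_count_mapr; apply: arc_count0. Qed.

Lemma arc_count_rcons R c s :
  (forall u w, R (rcons u c) (rcons w c) = R u w) ->
  arc_count R (map (rcons^~ c) s) (map (rcons^~ c) s) = arc_count R s s.
Proof.
by move=> R_rcons; rewrite arc_count_mapl arc_count_mapr; apply: arc_count_eq.
Qed.

Lemma arc_count_to_rcons c s :
  arc_count arc_to (map (rcons^~ c) s) (map (rcons^~ c) s) = arc_count arc_to s s.
Proof. by apply: arc_count_rcons => u w; apply: arc_to_rcons. Qed.

Lemma arc_count_tto_rcons c s :
  arc_count arc_tto (map (rcons^~ c) s) (map (rcons^~ c) s) = arc_count arc_tto s s.
Proof. by apply: arc_count_rcons => u w; apply: arc_tto_rcons. Qed.

Lemma a_odd n : a (2 * n + 1) = a n.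
Proof.
rewrite !aE !(arc_count_perm _ (perm_H_odd n) (perm_H_odd n)).
by rewrite arc_count_to_rcons arc_count_tto_rcons.
Qed.

Lemma a_4n2 n : a (4 * n + 2) = a (2 * n) + a n + b n.
Proof.
rewrite !aE !(arc_count_perm _ (perm_H_4n2 n) (perm_H_4n2 n)) !arc_count_cat2.
rewrite !arc_count_to_rcons !arc_count_tto_rcons.
set S10 := map _ (map _ (H n)); set S2 := map _ (H (2 * n)).
have no_to_10_2 : arc_count arc_to S10 S2 = 0.
  by apply: arc_count_map0 => u w; apply: arc_to_rcons_02.
have no_tto_10_2 : arc_count arc_tto S10 S2 = 0.
  by apply: arc_count_map0 => u w; apply: arc_tto_rcons_02.
have no_tto_2_10 : arc_count arc_tto S2 S10 = 0.
  by rewrite /S10 -map_comp; apply: arc_count_map0 => u w; apply: arc_tto_rcons_2_10.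
have to_2_10 : arc_count arc_to S2 S10 = b n.
  rewrite !arc_count_mapl !arc_count_mapr arc_count_swap /b.
  apply: arc_count_functional => u; rewrite mem_H => u_hyper /=.
  (* The word 10 is reached from 2 by the head arc, any other u10 from u02. *)
  rewrite (eq_in_count (a2 := pred1 (if u is [::] then [::] else rcons u 0))).
    case: u u_hyper => [|e u] u_hyper; rewrite count_mem_H.
      by move: u_hyper; rewrite !is_hyper_nil muln_eq0 => ->.
    by rewrite is_hyper_rcons_double // u_hyper.
  move=> x; rewrite mem_H /= arc_to_rcons_2_10 => x_hyper.
  case: u u_hyper => [_|e u _] /=; last by rewrite andbF.
  by rewrite andbT; case: (x =P [:: 0]) x_hyper => [-> //|_]; rewrite orbF.
by rewrite no_to_10_2 no_tto_10_2 no_tto_2_10 to_2_10; lia.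
Qed.

Lemma a_4n4 n : a (4 * n + 4) = a (2 * n + 2) + a n + b n.
Proof.
rewrite !aE !(arc_count_perm _ (perm_H_4n4 n) (perm_H_4n4 n)) !arc_count_cat2.
rewrite !arc_count_to_rcons !arc_count_tto_rcons.
set S0 := map _ (H (2 * n + 2)); set S12 := map _ (map _ (H n)).
have no_to_0_12 : arc_count arc_to S0 S12 = 0.
  by apply: arc_count_map0 => u w; apply: arc_to_rcons_02.
have no_tto_0_12 : arc_count arc_tto S0 S12 = 0.
  by apply: arc_count_map0 => u w; apply: arc_tto_rcons_02.
have no_to_12_0 : arc_count arc_to S12 S0 = 0.
  by rewrite /S12 -map_comp; apply: arc_count_map0 => u w; apply: arc_to_rcons_12_0.
have tto_12_0 : arc_count arc_tto S12 S0 = b n.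
  rewrite !arc_count_mapl !arc_count_mapr /b.
  apply: arc_count_functional => u; rewrite mem_H => u_hyper /=.
  rewrite (eq_count (a2 := pred1 (rcons u 2))) => [|w]; last exact: arc_tto_rcons_12_0.
  by rewrite count_mem_H is_hyper_rcons_even u_hyper orbT.
by rewrite no_to_0_12 no_tto_0_12 no_to_12_0 tto_12_0; lia.
Qed.

Lemma hyperbinary_ind (P : nat -> Prop) :
  P 0 ->
  (forall n, P n -> P (2 * n + 1)) ->
  (forall n, P (2 * n) -> P n -> P (4 * n + 2)) ->
  (forall n, P (2 * n + 2) -> P n -> P (4 * n + 4)) ->
  forall n, P n.
Proof.
move=> P0 P_odd P_4n2 P_4n4; elim/ltn_ind => -[// | n] IHn.
have [q [r [n_def r_lt4]]] : exists q r, n.+1 = 4 * q + r /\ r < 4.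
  by exists (n.+1 %/ 4), (n.+1 %% 4); rewrite ltn_mod; split=> //; lia.
rewrite n_def; case: r n_def r_lt4 => [|[|[|[|r]]]] // n_def _.
- have -> : 4 * q + 0 = 4 * q.-1 + 4 by lia.
  by apply: P_4n4; apply: IHn; lia.
- have -> : 4 * q + 1 = 2 * (2 * q) + 1 by lia.
  by apply: P_odd; apply: IHn; lia.
- by apply: P_4n2; apply: IHn; lia.
- have -> : 4 * q + 3 = 2 * (2 * q + 1) + 1 by lia.
  by apply: P_odd; apply: IHn; lia.
Qed.

Local Open Scope ring_scope.

Lemma v0 : v 0 = 0.
Proof. by rewrite /v /a /= !big_cons !big_nil. Qed.

Lemma v_odd n : v (2 * n + 1)%N = v n.
Proof. by rewrite /v a_odd b_odd. Qed.

Lemma v_4n2 n : v (4 * n + 2)%N = v (2 * n)%N + (a n)%:Z.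
Proof. by rewrite /v a_4n2 b_4n2; lia. Qed.

Lemma v_4n4 n : v (4 * n + 4)%N = v (2 * n + 2)%N + (a n)%:Z.
Proof. by rewrite /v a_4n4 b_4n4; lia. Qed.

Lemma a_of_v n : (a n)%:Z = v n + (b n)%:Z - 1.
Proof. by rewrite /v; lia. Qed.

Theorem mainTheorem1 :
  [/\ v 0 = 0,
      (forall n : nat, v (2 * n + 1)%N = v n),
      (forall n : nat, v (4 * n + 2)%N = v (2 * n)%N + v n + (b n)%:Z - 1)
    & (forall n : nat, v (4 * n + 4)%N = v (2 * n + 2)%N + v n + (b n)%:Z - 1)]
  /\
  (forall n : nat, v (4 * n + 2)%N = v (2 * n)%N + (a n)%:Z
                /\ v (4 * n + 4)%N = v (2 * n + 2)%N + (a n)%:Z)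
  /\
  (forall f : nat -> int,
      f 0%N = 0 ->
      (forall n : nat, f (2 * n + 1)%N = f n) ->
      (forall n : nat, f (4 * n + 2)%N = f (2 * n)%N + f n + (b n)%:Z - 1) ->
      (forall n : nat, f (4 * n + 4)%N = f (2 * n + 2)%N + f n + (b n)%:Z - 1) ->
      forall n : nat, f n = v n).
Proof.
have v_4n2' n : v (4 * n + 2)%N = v (2 * n)%N + v n + (b n)%:Z - 1.
  by rewrite v_4n2 a_of_v !addrA.
have v_4n4' n : v (4 * n + 4)%N = v (2 * n + 2)%N + v n + (b n)%:Z - 1.
  by rewrite v_4n4 a_of_v !addrA.
split; first by split; [exact: v0 | exact: v_odd | exact: v_4n2' | exact: v_4n4'].
split=> [n|f f0 f_odd f_4n2 f_4n4]; first by rewrite v_4n2 v_4n4.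
elim/hyperbinary_ind => [|n IHn|n IH2n IHn|n IH2n2 IHn].
- by rewrite f0 v0.
- by rewrite f_odd v_odd.
- by rewrite f_4n2 v_4n2' IH2n IHn.
- by rewrite f_4n4 v_4n4' IH2n2 IHn.
Qed.
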